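(* Let $T$ be a finite rooted tree in which every inner node has at least two children, with node set $V$ and leaf set $L$. Let $X\subseteq V\setminus L$ and $s\in V\setminus X$. If $X$ is thin, then there exists a leaf $t$ which is a descendant of $s$ such that no node on the path from $t$ to $s$ belongs to $X$.
   Context: A set $X\subseteq V\setminus L$ of inner nodes is thin if for every $x\in X$ other than the root, the parent of $x$ does not belong to $X$, and $x$ has at least one sibling (possibly a leaf) that does not belong to $X$. Every node is its own descendant. *)

(* A finite rooted tree is given by a finite node type V,
   a root r and a parent map par with par r = r such that every node reaches
   the root by iterating par. *)
From mathcomp Require Import all_boot.
Set Implicit Arguments. Unset Strict Implicit. Unset Printing Implicit Defensive.

Section Trees.
Variables (V : finType) (r : V) (par : V -> V).

Definition rooted_tree : Prop :=
  par r = r /\ forall x : V, exists n, iter n par x = r.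

Definition children (x : V) : {set V} := [set y | (y != r) && (par y == x)].

Definition is_leaf (x : V) : bool := children x == set0.
Definition is_inner (x : V) : bool := ~~ is_leaf x.

Definition full_branching : Prop :=
  forall x : V, is_inner x -> 2 <= #|children x|.

Definition descendant (t s : V) : Prop := exists n, iter n par t = s.

Definition thin (X : {set V}) : Prop :=
  forall x, x \in X -> x != r ->
    par x \notin X /\
    exists y, [/\ y \in children (par x), y != x & y \notin X].
End Trees.

From mathcomp Require Import all_boot.

Set Implicit Arguments.
Unset Strict Implicit.
Unset Printing Implicit Defensive.

(* Walk down from s avoiding X: an inner node has a child, and if that child
   lies in X then thinness provides a sibling outside X.  Among the nodes from
   which s is reached by climbing through nodes outside X, one of maximal depth
   exists by finiteness, and it must be a leaf. *)

Section RootedTree.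
Variables (V : finType) (r : V) (par : V -> V).

Lemma thin_child_notin (X : {set V}) (x : V) :
  full_branching r par -> thin r par X -> is_inner r par x ->
  exists2 c, c \in children r par x & c \notin X.
Proof.
move=> full thinX x_inner.
have [c xc] : exists c, c \in children r par x.
  by apply/card_gt0P; apply: leq_trans (full x x_inner).
have [cX | cX] := boolP (c \in X); last by exists c.
move: (xc); rewrite inE => /andP [cr /eqP <-].
by have [_ [y [yc _ yX]]] := thinX c cX cr; exists y.
Qed.

Definition par_avoid (X : {set V}) : rel V :=
  [rel x y | (par x == y) && (x \notin X)].

Lemma par_avoid_connect_iter (X : {set V}) (t s : V) :
  s \notin X -> connect (par_avoid X) t s ->
  exists n, iter n par t = s /\ forall k, k <= n -> iter k par t \notin X.
Proof.
move=> sX /connectP [p]; elim: p t => [|x p IHp] t /=.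
  by move=> _ <-; exists 0; split=> // k; rewrite leqn0 => /eqP ->.
case/andP=> /andP [/eqP tx tX] xp s_last.
have [n [xs xpX]] := IHp x xp s_last.
exists n.+1; split; first by rewrite iterSr tx.
by case=> [|k] // kn; rewrite iterSr tx; apply: xpX.
Qed.

Hypothesis tree : rooted_tree r par.

Lemma reaches_root (x : V) : exists n, iter n par x == r.
Proof. by have [n xn] := tree.2 x; exists n; apply/eqP. Qed.

Definition depth (x : V) : nat := ex_minn (reaches_root x).

Lemma depth_par (c : V) : c != r -> depth (par c) < depth c.
Proof.
move=> cr; rewrite /depth; case: (ex_minnP (reaches_root c)) => [[|m] cm _].
  by rewrite /= cm in cr.
case: (ex_minnP (reaches_root (par c))) => m' _ min_m'.
by apply: min_m'; rewrite -iterSr.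
Qed.

End RootedTree.

Theorem lemma3p7 (V : finType) (r : V) (par : V -> V)
  (Htree : rooted_tree r par) (Hfull : full_branching r par)
  (X : {set V}) (s : V)
  (HXinner : forall x, x \in X -> is_inner r par x)
  (Hs : s \notin X)
  (Hthin : thin r par X) :
  exists t : V, is_leaf r par t /\
    exists n, iter n par t = s /\ forall k, k <= n -> iter k par t \notin X.
Proof.
have [t ts t_max] :=
  @arg_maxnP V s [pred t | connect (par_avoid par X) t s] (depth Htree)
    (connect0 _ s).
exists t; split; last exact: par_avoid_connect_iter.
apply/negPn/negP => t_inner.
have [c] := thin_child_notin Hfull Hthin t_inner.
rewrite inE => /andP [cr /eqP ct] cX.
have cs : connect (par_avoid par X) c s.
  by apply: connect_trans ts; apply: connect1; rewrite /par_avoid /= ct eqxx.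
by have := depth_par Htree cr; rewrite ct ltnNge => /negP; apply; exact: t_max.
Qed.
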